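(* Let $\varphi$ be a bounded setfunction defined on a set-algebra $(J,\mathcal{B})$, with $\varphi(\emptyset)=0$. Then there exists a sequence $(\varphi_n\colon n\in\mathbb{N})$ of finite quotients of $\varphi$ such that $\varphi_n\rightarrowtail\varphi$.
   Context: A set-algebra $(J,\mathcal{B})$ is a family of subsets of $J$ containing $\emptyset$ and closed under complement and finite union; a setfunction on it is a map $\mathcal{B}\to\mathbb{R}$. For $k\in\mathbb{N}$ and a map $F\colon J\to[k]$ with $F^{-1}(i)\in\mathcal{B}$ for every $i$, the quotient $\varphi\circ F^{-1}$ is the setfunction $A\mapsto\varphi(F^{-1}(A))$ on $2^{[k]}$ (a finite quotient); $Q_k(\varphi)\subseteq\mathbb{R}^{2^k}$ is the set of all quotients of $\varphi$ on $[k]$. $\varphi_n\rightarrowtail\varphi$ means that for every $k\in\mathbb{N}$ the Hausdorff distance in Euclidean $\mathbb{R}^{2^k}$ between $Q_k(\varphi_n)$ and $Q_k(\varphi)$ tends to $0$. *)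

From HB Require Import structures.
From mathcomp Require Import all_boot all_order all_algebra.
From mathcomp Require Import all_classical all_reals all_analysis.
Set Implicit Arguments. Unset Strict Implicit. Unset Printing Implicit Defensive.
Import Order.TTheory GRing.Theory Num.Theory.
Local Open Scope classical_set_scope.
Local Open Scope ring_scope.

Definition is_set_algebra (J : Type) (B : set (set J)) : Prop :=
  [/\ B set0,
      (forall A, B A -> B (~` A)) &
      (forall A C, B A -> B C -> B (A `|` C))].

(* A setfunction on (J,B) is represented by phi : set J -> R; only its values
   on B matter.  It is bounded if |phi| is bounded on B. *)
Definition bounded_setfun (R : realType) (J : Type) (B : set (set J))
  (phi : set J -> R) : Prop :=
  exists M : R, forall A, B A -> `|phi A| <= M.

Definition meas_map (J : Type) (B : set (set J)) (k : nat) (F : J -> 'I_k) : Prop :=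
  forall i : 'I_k, B (F @^-1` [set i]).

Definition quot (R : realType) (J : Type) (phi : set J -> R) (k : nat)
  (F : J -> 'I_k) : {set 'I_k} -> R :=
  fun A => phi (F @^-1` [set i | i \in A]).

Definition Qk (R : realType) (J : Type) (B : set (set J)) (phi : set J -> R)
  (k : nat) : set ({set 'I_k} -> R) :=
  [set psi | exists F : J -> 'I_k, meas_map B F /\ psi = quot phi F].

(* Q_k(psi) for a setfunction psi on the full set-algebra 2^[m]
   (every map [m] -> [k] is measurable). *)
Definition Qk_fin (R : realType) (m : nat) (psi : {set 'I_m} -> R) (k : nat)
  : set ({set 'I_k} -> R) :=
  [set chi | exists G : 'I_m -> 'I_k, chi = fun A : {set 'I_k} => psi (finset (fun x => G x \in A))].

Definition finite_quotient (R : realType) (J : Type) (B : set (set J))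
  (phi : set J -> R) (m : nat) (psi : {set 'I_m} -> R) : Prop :=
  exists F : J -> 'I_m, meas_map B F /\ psi = quot phi F.

Definition eucl (R : realType) (k : nat) (u v : {set 'I_k} -> R) : R :=
  Num.sqrt (\sum_(A : {set 'I_k}) (u A - v A) ^+ 2).

Definition hausdorff (R : realType) (T : Type) (d : T -> T -> R)
  (X Y : set T) : \bar R :=
  maxe (ereal_sup [set ereal_inf [set (d x y)%:E | y in Y] | x in X])
       (ereal_sup [set ereal_inf [set (d x y)%:E | x in X] | y in Y]).

Definition conv_quot (R : realType) (J : Type) (B : set (set J))
  (phi : set J -> R) (m : nat -> nat) (psi : forall n, {set 'I_(m n)} -> R)
  : Prop :=
  forall k : nat, (0 < k)%N ->
    (fun n => hausdorff (@eucl R k) (@Qk_fin R (m n) (psi n) k) (@Qk R J B phi k))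
      @ \oo --> (0 : \bar R)%E.

From HB Require Import structures.
From mathcomp Require Import all_boot all_order all_algebra.
From mathcomp Require Import all_classical all_reals all_analysis.
From mathcomp Require Import ring lra.
Import Order.TTheory GRing.Theory Num.Theory.
Local Open Scope classical_set_scope.
Local Open Scope ring_scope.
Set Implicit Arguments. Unset Strict Implicit. Unset Printing Implicit Defensive.

(* Since phi is bounded, Q_k(phi) is totally bounded for each k: sorting the
   measurable maps J -> [k] by the grid cell (of mesh eps / 2^(2^k)) holding
   their quotients yields a finite eps-net of measurable maps.  Let F_n be a
   measurable common refinement of the 1/(n+1)-nets for all k <= n.  Every
   quotient of phi o F_n^-1 is a quotient of phi, and every quotient of phi on
   [k], k <= n, is within 1/(n+1) of the quotient along some map factoring
   through F_n; so d_H(Q_k(phi o F_n^-1), Q_k(phi)) <= 1/(n+1). *)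

Section SetAlgebra.
Variables (J : Type) (B : set (set J)).
Hypothesis hB : is_set_algebra B.

Lemma set_algebraT : B setT.
Proof. by case: hB => B0 BC _; rewrite -setC0; apply: BC. Qed.

Lemma set_algebraI A C : B A -> B C -> B (A `&` C).
Proof.
case: hB => _ BC BU BA BC'.
by rewrite -[A]setCK -[C]setCK -setCU; apply/BC/BU; apply: BC.
Qed.

Lemma meas_map_preimage k (F : J -> 'I_k) (A : {set 'I_k}) :
  meas_map B F -> B (F @^-1` [set i | i \in A]).
Proof.
move=> mF; suff BF (s : seq 'I_k) : B [set x | F x \in s].
  by have := BF (enum A); congr B; apply/funext => x /=; rewrite mem_enum.
elim: s => [|i s IHs].
  have -> : [set x | F x \in [::]] = set0 by apply/seteqP; split => x.
  by case: hB.
have -> : [set x | F x \in i :: s] = F @^-1` [set i] `|` [set x | F x \in s].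
  apply/seteqP; split => x /=; rewrite in_cons.
    by case/orP => [/eqP|]; [left|right].
  by case=> [->|->]; rewrite ?eqxx ?orbT.
by case: hB => _ _; apply.
Qed.

Lemma meas_map_comp c k (F : J -> 'I_c) (G : 'I_c -> 'I_k) :
  meas_map B F -> meas_map B (G \o F).
Proof.
move=> mF j; have := meas_map_preimage [set i | G i == j] mF.
by congr B; apply/funext => x /=; rewrite inE; apply/propext; split => /eqP.
Qed.

Lemma meas_map_cst k (i : 'I_k) : meas_map B (fun _ : J => i).
Proof.
move=> j; rewrite preimage_cst; case: ifPn => _; first exact: set_algebraT.
by case: hB.
Qed.

Definition refines a b (F : J -> 'I_a) (F1 : J -> 'I_b) : Prop :=
  exists G : 'I_a -> 'I_b, F1 =1 G \o F.

Lemma refines_trans a b c (F : J -> 'I_a) (F1 : J -> 'I_b) (F2 : J -> 'I_c) :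
  refines F F1 -> refines F1 F2 -> refines F F2.
Proof. by move=> [G FG] [H FH]; exists (H \o G) => x; rewrite FH /= FG. Qed.

Lemma common_refinement2 a b (F1 : J -> 'I_a) (F2 : J -> 'I_b) :
  meas_map B F1 -> meas_map B F2 ->
  exists c (F : J -> 'I_c), [/\ meas_map B F, refines F F1 & refines F F2].
Proof.
move=> mF1 mF2; pose F x := enum_rank ((F1 x, F2 x) : 'I_a * 'I_b).
exists _, F; split; last 2 first.
- by exists (fun j => (enum_val j).1) => x; rewrite /= enum_rankK.
- by exists (fun j => (enum_val j).2) => x; rewrite /= enum_rankK.
move=> j; have -> : F @^-1` [set j] =
    F1 @^-1` [set (enum_val j).1] `&` F2 @^-1` [set (enum_val j).2].
  apply/seteqP; split=> x; rewrite /F /=; [move=> <-|case=> -> ->].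
    by rewrite enum_rankK.
  by rewrite -surjective_pairing enum_valK.
exact: set_algebraI.
Qed.

Lemma common_refinement (I : finType) (k : I -> nat) (Fs : forall i, J -> 'I_(k i)) :
  (forall i, meas_map B (Fs i)) ->
  exists c (F : J -> 'I_c), meas_map B F /\ forall i, refines F (Fs i).
Proof.
move=> mFs; suff [c [F [mF rF]]] : exists c (F : J -> 'I_c),
    meas_map B F /\ forall i, i \in enum I -> refines F (Fs i).
  by exists c, F; split => // i; apply: rF; rewrite mem_enum.
elim: (enum I) => [|i s [c [F [mF rF]]]].
  by exists 1, (fun=> ord0); split => //; exact: meas_map_cst.
have [c' [F' [mF' rFi rFF]]] := common_refinement2 (mFs i) mF.
exists c', F'; split => // j; rewrite in_cons => /predU1P[-> //|js].
exact: refines_trans rFF (rF j js).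
Qed.

End SetAlgebra.

Lemma finite_net (T : Type) (P : T -> Prop) (close : T -> T -> Prop)
    (C : finType) (code : T -> C) :
  (forall x y, P x -> P y -> code x = code y -> close x y) ->
  exists (I : finType) (f : I -> T),
    (forall i, P (f i)) /\ forall x, P x -> exists i, close (f i) x.
Proof.
move=> code_close.
pose I := {c : C | `[< exists x, P x /\ code x = c >]}.
have rep (i : I) : {x : T | P x /\ code x = val i}.
  by apply: cid; apply/asboolP; exact: (valP i).
exists I, (fun i => sval (rep i)); split => [i|x Px].
  by case: (svalP (rep i)).
have Ix : `[< exists y, P y /\ code y = code x >] by apply/asboolP; exists x.
pose ix : I := exist _ (code x) Ix.
by exists ix; case: (svalP (rep ix)) => Py ey; apply: code_close.
Qed.

Section Quantization.
Variable R : realType.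

Lemma truncn_close (x y : R) :
  0 <= x -> 0 <= y -> Num.truncn x = Num.truncn y -> `|x - y| < 1.
Proof.
move=> x0 y0 exy; move: (truncn_itv x0) (truncn_itv y0); rewrite exy -!natr1.
by move=> /andP[? ?] /andP[? ?]; rewrite ltr_distlC; apply/andP; split; lra.
Qed.

Lemma truncn_scaled_close (M d v w : R) : 0 < d -> `|v| <= M -> `|w| <= M ->
  Num.truncn ((v + M) / d) = Num.truncn ((w + M) / d) -> `|v - w| <= d.
Proof.
move=> d0 vM wM evw; have scaled_ge0 u : `|u| <= M -> 0 <= (u + M) / d.
  move=> uM; rewrite divr_ge0 ?(ltW d0) //.
  by move: uM; rewrite ler_norml => /andP[]; lra.
have -> : v - w = ((v + M) / d - (w + M) / d) * d.
  by field; rewrite gt_eqF.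
rewrite normrM (gtr0_norm d0) ler_piMl ?ltW //.
by apply: (truncn_close _ _ evw); exact: scaled_ge0.
Qed.

Lemma truncn_scaled_le (M d v : R) : 0 < d -> `|v| <= M ->
  (Num.truncn ((v + M) / d) <= Num.truncn ((M + M) / d))%N.
Proof.
move=> d0 vM; apply/le_truncn/ler_wpM2r; first by rewrite invr_ge0 ltW.
by move: vM; rewrite ler_norml => /andP[]; lra.
Qed.

End Quantization.

Lemma eucl_ge0 (R : realType) k (u v : {set 'I_k} -> R) : 0 <= eucl u v.
Proof. exact: sqrtr_ge0. Qed.

Lemma eucl_xx (R : realType) k (u : {set 'I_k} -> R) : eucl u u = 0.
Proof. by rewrite /eucl big1 ?sqrtr0 // => A _; rewrite subrr expr0n. Qed.

Lemma eucl_le_card (R : realType) k (u v : {set 'I_k} -> R) (d : R) :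
  (forall A, `|u A - v A| <= d) -> eucl u v <= #|{: {set 'I_k}}|%:R * d.
Proof.
move=> uvd; have d0 : 0 <= d := le_trans (normr_ge0 _) (uvd finset.set0).
set K : R := _%:R.
have K1 : 1 <= K by rewrite ler1n; apply/card_gt0P; exists finset.set0.
rewrite /eucl -(ger0_norm (mulr_ge0 (le_trans ler01 K1) d0)) -sqrtr_sqr.
rewrite ler_sqrt ?sqr_ge0 //.
apply: (@le_trans _ _ (\sum_(A : {set 'I_k}) d ^+ 2)).
  by apply: ler_sum => A _; rewrite -real_normK ?num_real // ler_sqr ?nnegrE.
rewrite sumr_const -mulr_natl -/K exprMn ler_wpM2r ?sqr_ge0 //.
by rewrite expr2 ler_peMl ?ler01.
Qed.

Lemma hausdorff_le (R : realType) (T : Type) (d : T -> T -> R) (X Y : set T)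
    (e : R) :
  (forall x, X x -> exists2 y, Y y & d x y <= e) ->
  (forall y, Y y -> exists2 x, X x & d x y <= e) ->
  (hausdorff d X Y <= e%:E)%E.
Proof.
move=> XY YX; rewrite /hausdorff ge_max; apply/andP; split;
  apply: ge_ereal_sup => _ [x Xx <-]; apply: ge_ereal_inf.
  by have [y Yy dxy] := XY x Xx; exists (d x y)%:E; [exists y|rewrite lee_fin].
by have [y Yy dyx] := YX x Xx; exists (d y x)%:E; [exists y|rewrite lee_fin].
Qed.

Lemma hausdorff_ge0 (R : realType) (T : Type) (d : T -> T -> R) (X Y : set T)
    (y0 : T) :
  (forall x y, 0 <= d x y) -> Y y0 -> (0 <= hausdorff d X Y)%E.
Proof.
move=> d0 Yy0; rewrite /hausdorff le_max; apply/orP; right.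
apply: le_ereal_sup_tmp; exists (ereal_inf [set (d x y0)%:E | x in X]).
  by exists y0.
by apply: le_ereal_inf_tmp => _ [x _ <-]; rewrite lee_fin.
Qed.

Section Quotients.
Variables (R : realType) (J : Type) (B : set (set J)) (phi : set J -> R) (M : R).
Hypotheses (hB : is_set_algebra B) (hM : forall A, B A -> `|phi A| <= M).

Lemma quot_comp c k (F : J -> 'I_c) (G : 'I_c -> 'I_k) :
  quot phi (G \o F) = fun A => quot phi F [set x | G x \in A].
Proof.
by apply/funext => A; rewrite /quot; congr phi; apply/funext => x /=; rewrite inE.
Qed.

Lemma quot_finite_net k (eps : R) : 0 < eps ->
  exists (I : finType) (Fs : I -> J -> 'I_k), (forall i, meas_map B (Fs i)) /\
    forall F, meas_map B F -> exists i, eucl (quot phi (Fs i)) (quot phi F) <= eps.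
Proof.
move=> eps0; set K : R := #|{: {set 'I_k}}|%:R.
have K0 : 0 < K by rewrite ltr0n; apply/card_gt0P; exists finset.set0.
pose d := eps / K; have d0 : 0 < d by rewrite divr_gt0.
pose cell v : 'I_(Num.truncn ((M + M) / d)).+1 := inord (Num.truncn ((v + M) / d)).
have cellK v : `|v| <= M -> cell v = Num.truncn ((v + M) / d) :> nat.
  by move=> vM; rewrite inordK // ltnS truncn_scaled_le.
have quotM (F : J -> 'I_k) A : meas_map B F -> `|quot phi F A| <= M.
  by move=> mF; apply: hM; exact: meas_map_preimage.
apply: (@finite_net _ _ (fun F F' => eucl (quot phi F) (quot phi F') <= eps) _
  (fun F => [ffun A => cell (quot phi F A)])) => F F' mF mF' /ffunP eqc.
rewrite -[eps](divfK (lt0r_neq0 K0)) mulrC -/d; apply: eucl_le_card => A.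
move: (eqc A); rewrite !ffunE => /(congr1 (@nat_of_ord _)).
by rewrite !cellK ?quotM //; apply: truncn_scaled_close; rewrite ?quotM.
Qed.

Lemma approximating_partition n (eps : R) : 0 < eps ->
  exists c (F : J -> 'I_c), meas_map B F /\
    forall k, (k < n)%N -> forall F1 : J -> 'I_k, meas_map B F1 ->
      exists2 F' : J -> 'I_k, refines F F' & eucl (quot phi F') (quot phi F1) <= eps.
Proof.
move=> eps0; elim: n => [|n [c [F [mF appF]]]].
  by exists 1, (fun=> ord0); split => //; exact: meas_map_cst.
have [I [Fs [mFs netFs]]] := quot_finite_net n eps0.
have [c' [F' [mF' rF']]] := common_refinement hB mFs.
have [c'' [F'' [mF'' rF rF'']]] := common_refinement2 hB mF mF'.
exists c'', F''; split => // k; rewrite ltnS leq_eqVlt => /predU1P[-> | kn] F1 mF1.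
  have [i close] := netFs F1 mF1.
  by exists (Fs i) => //; apply: refines_trans rF'' (rF' i).
have [F2 rF2 close] := appF k kn F1 mF1.
by exists F2 => //; apply: refines_trans rF rF2.
Qed.

Lemma Qk_cst k (k0 : (0 < k)%N) : Qk B phi (quot phi (fun _ : J => Ordinal k0)).
Proof. by exists (fun=> Ordinal k0); split => //; exact: meas_map_cst. Qed.

Lemma hausdorff_Qk_le c (F : J -> 'I_c) k (e : R) : meas_map B F -> 0 <= e ->
  (forall F1 : J -> 'I_k, meas_map B F1 ->
    exists2 F', refines F F' & eucl (quot phi F') (quot phi F1) <= e) ->
  (hausdorff (@eucl R k) (@Qk_fin R c (quot phi F) k) (@Qk R J B phi k) <= e%:E)%E.
Proof.
move=> mF e0 appF; apply: hausdorff_le => [_ [G ->]|_ [F1 [mF1 ->]]].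
  rewrite -quot_comp; exists (quot phi (G \o F)); last by rewrite eucl_xx.
  by exists (G \o F); split => //; exact: meas_map_comp.
have [F' [G FG] close] := appF F1 mF1.
by exists (quot phi F') => //; exists G; rewrite -quot_comp (funext FG).
Qed.

End Quotients.

Theorem theorem4p1 (R : realType) (J : Type) (B : set (set J))
  (hB : is_set_algebra B) (phi : set J -> R)
  (hbd : bounded_setfun B phi) (h0 : phi set0 = 0) :
  exists (m : nat -> nat) (psi : forall n, {set 'I_(m n)} -> R),
    (forall n, finite_quotient B phi (psi n)) /\ conv_quot B phi psi.
Proof.
case: hbd => M hM.
have part n : {cF : {c : nat & J -> 'I_c} | meas_map B (projT2 cF) /\
    forall k, (k < n.+1)%N -> forall F1 : J -> 'I_k, meas_map B F1 ->
      exists2 F', refines (projT2 cF) F' &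
        eucl (quot phi F') (quot phi F1) <= harmonic n}.
  apply: cid.
  have [c [F partF]] := approximating_partition hB hM n.+1 (harmonic_gt0 n).
  by exists (existT _ c F).
exists (fun n => projT1 (sval (part n))).
exists (fun n => quot phi (projT2 (sval (part n)))).
split => [n|k k0].
  by exists (projT2 (sval (part n))); split => //; case: (svalP (part n)).
apply: (@squeeze_cvge _ _ _ _ (cst 0%E) _ (EFin \o harmonic)); last first.
- exact: cvge_harmonic.
- exact: cvg_cst.
near=> n; case: (svalP (part n)) => mF appF.
rewrite (hausdorff_ge0 _ (@eucl_ge0 R k) (Qk_cst phi hB k0)) /=.
apply: (hausdorff_Qk_le hB mF (ltW (harmonic_gt0 n))).
by apply: appF; near: n; exact: nbhs_infty_ge.
Unshelve. all: end_near.
Qed.
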